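(* Let $\mu_1,\dots,\mu_{n_{\mathcal Q}}\in[-1,1]$ be distinct quadrature nodes including $\mu=0$, and let $\mathbf m_1(\mu)=(\mu,\mu^2,\dots,\mu^N)^T$. Let $A_\pm,b_\pm$ be half-space representations $$\operatorname{co}\{\mathbf m_1(\mu_i)\}_{\mu_i\ge0}=\{\mathbf u_{1+}:A_+\mathbf u_{1+}\le b_+\},\qquad \operatorname{co}\{\mathbf m_1(\mu_i)\}_{\mu_i\le0}=\{\mathbf u_{1-}:A_-\mathbf u_{1-}\le b_-\},$$ with rows $\mathbf a_{\pm i}^T$ of $A_\pm$, and assume $b_\pm\ge0$ componentwise. Then the closure of the normalized numerically realizable set for the mixed-moment basis, $$\overline{\mathcal R}^{\mathrm{mix}}|_{u_0=1}:=\operatorname{co}\Big(\{(\mathbf m_1(\mu_i),0):\mu_i\ge0\}\cup\{(0,\mathbf m_1(\mu_i)):\mu_i\le0\}\Big)\subset\mathbb R^{2N},$$ equals $\{\mathbf u_1=(\mathbf u_{1+},\mathbf u_{1-}):A\mathbf u_1\le b\}$, where the inequalities are: $A_+\mathbf u_{1+}\le b_+$; $A_-\mathbf u_{1-}\le b_-$; and, for every pair $(i,j)$ with $b_{+i}\neq0$ and $b_{-j}\neq0$, $b_{+i}^{-1}\mathbf a_{+i}^T\mathbf u_{1+}+b_{-j}^{-1}\mathbf a_{-j}^T\mathbf u_{1-}\le1$.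
   Context: The mixed-moment basis is $(1,\mu_+,\mu_-,\dots,\mu_+^N,\mu_-^N)^T$ with $\mu_+=\max(\mu,0)$, $\mu_-=\min(\mu,0)$; after dropping the constant component and ordering the remaining components as $(\mathbf u_{1+},\mathbf u_{1-})$ (positive-half moments, then negative-half moments), the basis evaluated at a node $\mu_i\ge0$ is $(\mathbf m_1(\mu_i),0)$ and at $\mu_i\le0$ is $(0,\mathbf m_1(\mu_i))$. $\operatorname{co}$ denotes convex hull; vector inequalities are componentwise. *)

From HB Require Import structures.
From mathcomp Require Import all_boot all_order all_algebra.
Set Implicit Arguments. Unset Strict Implicit. Unset Printing Implicit Defensive.
Import Order.TTheory GRing.Theory Num.Theory.
Local Open Scope ring_scope.

Definition in_conv (R : realFieldType) (d : nat) (I : finType) (P : pred I)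
  (f : I -> 'cV[R]_d) (x : 'cV[R]_d) : Prop :=
  exists w : I -> R,
    (forall i, P i -> 0 <= w i) /\
    \sum_(i | P i) w i = 1 /\
    x = \sum_(i | P i) w i *: f i.

Definition m1 (R : realFieldType) (N : nat) (mu : R) : 'cV[R]_N :=
  \col_(k < N) mu ^+ k.+1.

Definition mx_le (R : realFieldType) (p N : nat) (A : 'M[R]_(p, N))
  (u : 'cV[R]_N) (b : 'cV[R]_p) : Prop :=
  forall i : 'I_p, (A *m u) i 0 <= b i 0.

(* Index set of the generating points of the mixed-moment realizable set:
   inl i  ~ (m_1(mu_i), 0) for mu_i >= 0 ;  inr i ~ (0, m_1(mu_i)) for mu_i <= 0. *)
Definition mix_sel (R : realFieldType) (n : nat) (mu : 'I_n -> R)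
  (k : 'I_n + 'I_n) : bool :=
  match k with inl i => 0 <= mu i | inr i => mu i <= 0 end.

Definition mix_pt (R : realFieldType) (n N : nat) (mu : 'I_n -> R)
  (k : 'I_n + 'I_n) : 'cV[R]_(N + N) :=
  match k with
  | inl i => col_mx (m1 N (mu i)) 0
  | inr i => col_mx 0 (m1 N (mu i))
  end.

Definition Rmix_closed (R : realFieldType) (n N : nat) (mu : 'I_n -> R)
  (u : 'cV[R]_(N + N)) : Prop :=
  in_conv (mix_sel mu) (mix_pt N mu) u.

(* The hulls P_+ and P_- of the half-range moment vectors are bounded polytopes
   containing 0, so for every a >= 0, including a = 0, the dilate a P_+ is
   { u : A_+ u <= a b_+ }, and likewise for P_-.  The mixed hull is the union
   of the products a P_+ x c P_- over a + c = 1, hence (since 0 lies in P_-)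
   over a + c <= 1.  The least admissible a is the largest ratio
   a_{+i}^T u_{1+} / b_{+i} over b_{+i} != 0, and the cross inequalities say
   exactly that the two least admissible dilations sum to at most 1. *)

From HB Require Import structures.
From mathcomp Require Import all_boot all_order all_algebra lra.
Set Implicit Arguments. Unset Strict Implicit. Unset Printing Implicit Defensive.
Import Order.TTheory GRing.Theory Num.Theory.
Local Open Scope ring_scope.

Section ScaledHull.
Variables (R : realFieldType) (I : finType) (S : pred I) (d : nat).
Variable f : I -> 'cV[R]_d.

Definition in_scaled_conv (l : R) (u : 'cV[R]_d) : Prop :=
  exists w : I -> R,
    (forall i, S i -> 0 <= w i) /\ \sum_(i | S i) w i = l /\
    u = \sum_(i | S i) w i *: f i.

Lemma in_scaled_conv_ge0 l u : in_scaled_conv l u -> 0 <= l.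
Proof. by move=> [w [w_ge0 [<- _]]]; exact: sumr_ge0. Qed.

Lemma in_scaled_convZ t l u :
  0 <= t -> in_scaled_conv l u -> in_scaled_conv (t * l) (t *: u).
Proof.
move=> t_ge0 [w [w_ge0 [<- ->]]]; exists (fun i => t * w i); split; [|split].
- by move=> i Si; rewrite mulr_ge0 ?w_ge0.
- by rewrite mulr_sumr.
- by rewrite scaler_sumr; apply: eq_bigr => i _; rewrite scalerA.
Qed.

Lemma in_scaled_convE l u :
  0 < l -> in_scaled_conv l u <-> in_conv S f (l^-1 *: u).
Proof.
move=> l_gt0; have li_ge0 : 0 <= l^-1 by rewrite invr_ge0 ltW.
split=> [/(in_scaled_convZ li_ge0) | hu]; first by rewrite mulVf ?gt_eqF.
have := in_scaled_convZ (ltW l_gt0) hu.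
by rewrite mulr1 scalerA divff ?gt_eqF // scale1r.
Qed.

Lemma in_scaled_conv0 u : in_scaled_conv 0 u -> u = 0.
Proof.
move=> [w [w_ge0 [w_sum0 ->]]]; apply: big1 => i Si.
by rewrite (psumr_eq0P w_ge0 w_sum0 Si) scale0r.
Qed.

Lemma in_scaled_conv_widen i0 l l' u :
  S i0 -> f i0 = 0 -> l <= l' -> in_scaled_conv l u -> in_scaled_conv l' u.
Proof.
move=> Si0 fi0 le_ll' [w [w_ge0 [w_sum ->]]].
exists (fun i => w i + (if i == i0 then l' - l else 0)); split; [|split].
- by move=> i Si; rewrite addr_ge0 ?w_ge0 //; case: eqP; rewrite ?subr_ge0.
- rewrite big_split /= w_sum (bigD1 i0) //= eqxx big1 => [|i /andP[_ /negbTE ->] //].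
  by rewrite addr0 addrC subrK.
- rewrite (bigD1 i0) //= [in RHS](bigD1 i0) //= fi0 !scaler0 !add0r.
  by apply: eq_bigr => i /andP[_ /negbTE ->]; rewrite addr0.
Qed.

Lemma conv_norm_le u k :
  in_conv S f u -> `|u k 0| <= \big[Order.max/0]_(i | S i) `|f i k 0|.
Proof.
move=> [w [w_ge0 [w_sum1 ->]]]; rewrite summxE.
apply: le_trans (ler_norm_sum _ _ _) _.
rewrite -[X in _ <= X]mul1r -w_sum1 mulr_suml; apply: ler_sum => i Si.
rewrite mxE normrM (ger0_norm (w_ge0 _ Si)) ler_wpM2l ?w_ge0 //.
exact: le_bigmax_cond.
Qed.

Lemma conv_ray_eq0 u : (forall t, 0 <= t -> in_conv S f (t *: u)) -> u = 0.
Proof.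
move=> ray; apply/matrixP => k j; rewrite (ord1 j) mxE.
apply/eqP; apply: contraT => uk_neq0.
set M := \big[Order.max/0]_(i | S i) `|f i k 0|.
have M_ge0 : 0 <= M by apply: bigmax_ge_id.
have t_ge0 : 0 <= (M + 1) / `|u k 0| by rewrite divr_ge0 ?addr_ge0.
have := conv_norm_le k (ray _ t_ge0).
by rewrite mxE normrM (ger0_norm t_ge0) divfK ?normr_eq0 // -/M; lra.
Qed.

Variables (p : nat) (A : 'M[R]_(p, d)) (b : 'cV[R]_p).
Hypothesis conv_hrep : forall u, in_conv S f u <-> mx_le A u b.
Hypothesis b_ge0 : forall i, 0 <= b i 0.

Lemma in_scaled_conv_mx_le l u :
  0 <= l -> in_scaled_conv l u <-> forall i, (A *m u) i 0 <= l * b i 0.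
Proof.
rewrite le_eqVlt => /predU1P[<- | l_gt0].
  (* For l = 0 every ray through u lies in the hull, which is bounded. *)
  split=> [/in_scaled_conv0 -> i | Au_le0]; first by rewrite mulmx0 mxE mul0r.
  suff -> : u = 0.
    by exists (fun => 0); split=> //; rewrite ?big1 // => i _; rewrite scale0r.
  apply: conv_ray_eq0 => t t_ge0; apply/conv_hrep => i.
  rewrite -scalemxAr mxE (le_trans _ (b_ge0 i)) // mulr_ge0_le0 //.
  by have := Au_le0 i; rewrite mul0r.
have AZ i : (A *m (l^-1 *: u)) i 0 = l^-1 * (A *m u) i 0.
  by rewrite -scalemxAr mxE.
rewrite in_scaled_convE // conv_hrep.
by split=> hu i; have := hu i; rewrite AZ ler_pdivrMl.
Qed.

End ScaledHull.

Section MaxRatio.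
Variables (R : realFieldType) (p : nat).
Implicit Types (x b : 'cV[R]_p).

Definition max_ratio x b : R :=
  \big[Order.max/0]_(i | b i 0 != 0) ((b i 0)^-1 * x i 0).

Lemma max_ratio_ge0 x b : 0 <= max_ratio x b.
Proof. exact: bigmax_ge_id. Qed.

Lemma le_max_ratio x b i :
  b i 0 != 0 -> (b i 0)^-1 * x i 0 <= max_ratio x b.
Proof. exact: (le_bigmax_cond _ (fun k => (b k 0)^-1 * x k 0)). Qed.

Lemma le_max_ratio_scale x b i :
  0 <= b i 0 -> x i 0 <= b i 0 -> x i 0 <= max_ratio x b * b i 0.
Proof.
move=> bi_ge0 xi_le; have [bi0 | bi_neq0] := eqVneq (b i 0) 0.
  by rewrite bi0 mulr0 -bi0.
have bi_gt0 : 0 < b i 0 by rewrite lt_def bi_neq0.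
by rewrite -ler_pdivrMr // mulrC le_max_ratio.
Qed.

Lemma max_ratio_le x b a :
  (forall i, 0 <= b i 0) -> 0 <= a -> (forall i, x i 0 <= a * b i 0) ->
  max_ratio x b <= a.
Proof.
move=> b_ge0 a_ge0 xle; apply: bigmax_le => // i bi_neq0.
have bi_gt0 : 0 < b i 0 by rewrite lt_def bi_neq0 b_ge0.
by rewrite ler_pdivrMl // mulrC.
Qed.

End MaxRatio.

Lemma max_ratio_add_le1 (R : realFieldType) (p q : nat)
    (x b : 'cV[R]_p) (y c : 'cV[R]_q) :
  (forall i, 0 <= b i 0) -> (forall j, 0 <= c j 0) ->
  (forall i, x i 0 <= b i 0) -> (forall j, y j 0 <= c j 0) ->
  (forall i j, b i 0 != 0 -> c j 0 != 0 ->
     (b i 0)^-1 * x i 0 + (c j 0)^-1 * y j 0 <= 1) ->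
  max_ratio x b + max_ratio y c <= 1.
Proof.
move=> b_ge0 c_ge0 x_le y_le cross.
have ratio_le1 r (z e : 'cV[R]_r) k :
    0 <= e k 0 -> z k 0 <= e k 0 -> e k 0 != 0 -> (e k 0)^-1 * z k 0 <= 1.
  by move=> ek_ge0 zk_le ek_neq0; rewrite ler_pdivrMl ?mulr1 // lt_def ek_neq0.
rewrite -lerBrDr; apply: bigmax_le => [|i bi_neq0].
  rewrite subr_ge0; apply: bigmax_le => // j cj_neq0; exact: ratio_le1.
rewrite lerBrDr addrC -lerBrDr; apply: bigmax_le => [|j cj_neq0].
  by rewrite subr_ge0 ratio_le1.
by rewrite lerBrDr addrC cross.
Qed.

Lemma m1_0 (R : realFieldType) (N : nat) : m1 N (0 : R) = 0.
Proof. by apply/matrixP => k j; rewrite !mxE expr0n. Qed.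

Lemma sum_col_mx (R : realFieldType) (I : finType) (P : pred I) (m1 m2 n : nat)
    (F : I -> 'M[R]_(m1, n)) (G : I -> 'M[R]_(m2, n)) :
  \sum_(i | P i) col_mx (F i) (G i) = col_mx (\sum_(i | P i) F i) (\sum_(i | P i) G i).
Proof.
by elim/big_rec3: _ => [|i H F' G' _ ->]; rewrite ?col_mx0 ?add_col_mx.
Qed.

Section JoinHull.
Variables (R : realFieldType) (I J : finType) (S : pred I) (T : pred J).
Variables (d1 d2 : nat) (f : I -> 'cV[R]_d1) (g : J -> 'cV[R]_d2).

Definition join_sel (k : I + J) : bool :=
  match k with inl i => S i | inr j => T j end.

Definition join_pt (k : I + J) : 'cV[R]_(d1 + d2) :=
  match k with inl i => col_mx (f i) 0 | inr j => col_mx 0 (g j) end.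

Lemma sum_join_pt (w : I + J -> R) :
  \sum_(k | join_sel k) w k *: join_pt k =
  col_mx (\sum_(i | S i) w (inl i) *: f i) (\sum_(j | T j) w (inr j) *: g j).
Proof.
rewrite big_sumType /=.
under eq_bigr do rewrite scale_col_mx scaler0.
under [X in _ + X]eq_bigr do rewrite scale_col_mx scaler0.
by rewrite !sum_col_mx !big1_eq add_col_mx addr0 add0r.
Qed.

Lemma in_conv_join x y :
  in_conv join_sel join_pt (col_mx x y) <->
  exists a c, [/\ a + c = 1, in_scaled_conv S f a x & in_scaled_conv T g c y].
Proof.
split=> [[w [w_ge0 [w_sum1]]] |
         [a [c [ac1 [v [v_ge0 [va ->]]] [v' [v'_ge0 [v'c ->]]]]]]].
  rewrite sum_join_pt => /eq_col_mx[-> ->].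
  move: w_sum1; rewrite big_sumType /= => w_sum1.
  exists (\sum_(i | S i) w (inl i)), (\sum_(j | T j) w (inr j)); split=> //.
    by exists (fun i => w (inl i)); split=> // i; apply: (w_ge0 (inl i)).
  by exists (fun j => w (inr j)); split=> // j; apply: (w_ge0 (inr j)).
exists (fun k => match k with inl i => v i | inr j => v' j end).
split; [by case | split].
- by rewrite big_sumType /= va v'c.
- by rewrite sum_join_pt.
Qed.

End JoinHull.

Theorem mainTheorem6 (R : realFieldType) (n N p q : nat) (mu : 'I_n -> R)
  (Ap : 'M[R]_(p, N)) (bp : 'cV[R]_p) (Am : 'M[R]_(q, N)) (bm : 'cV[R]_q) :
  injective mu ->
  (forall i, -1 <= mu i <= 1) ->
  (exists i, mu i = 0) ->
  (forall u : 'cV[R]_N,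
     in_conv (fun i => 0 <= mu i) (fun i => m1 N (mu i)) u <-> mx_le Ap u bp) ->
  (forall u : 'cV[R]_N,
     in_conv (fun i => mu i <= 0) (fun i => m1 N (mu i)) u <-> mx_le Am u bm) ->
  (forall i, 0 <= bp i 0) ->
  (forall j, 0 <= bm j 0) ->
  forall up um : 'cV[R]_N,
    Rmix_closed mu (col_mx up um) <->
    [/\ mx_le Ap up bp,
        mx_le Am um bm &
        forall (i : 'I_p) (j : 'I_q), bp i 0 != 0 -> bm j 0 != 0 ->
          (bp i 0)^-1 * (Ap *m up) i 0 + (bm j 0)^-1 * (Am *m um) j 0 <= 1].
Proof.
move=> _ _ [i0 mu_i0] hullP hullM bp_ge0 bm_ge0 up um.
have scaledP := in_scaled_conv_mx_le hullP bp_ge0.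
have scaledM := in_scaled_conv_mx_le hullM bm_ge0.
apply: iff_trans (in_conv_join (fun i => 0 <= mu i) (fun i => mu i <= 0)
  (fun i => m1 N (mu i)) (fun i => m1 N (mu i)) up um) _.
split=> [[a [c [ac1 hp hm]]] | [hp hm cross]].
  have a_ge0 := in_scaled_conv_ge0 hp; have c_ge0 := in_scaled_conv_ge0 hm.
  move/(scaledP _ _ a_ge0): hp => Ap_le; move/(scaledM _ _ c_ge0): hm => Am_le.
  split=> [i | j | i j bi_neq0 bj_neq0].
  - by apply: le_trans (Ap_le i) _; rewrite ler_piMl //; lra.
  - by apply: le_trans (Am_le j) _; rewrite ler_piMl //; lra.
  - rewrite -ac1; apply: lerD; apply: le_trans (le_max_ratio _ _) _ => //;
      exact: max_ratio_le.
have ac_le1 := max_ratio_add_le1 bp_ge0 bm_ge0 hp hm cross.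
exists (max_ratio (Ap *m up) bp), (1 - max_ratio (Ap *m up) bp); split.
- by rewrite addrC subrK.
- by apply/scaledP => [|i]; [exact: max_ratio_ge0 | exact: le_max_ratio_scale].
- apply: (@in_scaled_conv_widen _ _ _ _ _ i0 (max_ratio (Am *m um) bm)).
  + by rewrite /= mu_i0.
  + by rewrite mu_i0 m1_0.
  + by rewrite lerBrDl.
  + by apply/scaledM => [|j]; [exact: max_ratio_ge0 | exact: le_max_ratio_scale].
Qed.
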